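(* Let $\mathbf A\in\mathbb R^{n\times p}$ with columns $\mathbf a_1,\dots,\mathbf a_p$, let $\mathbf y\in\mathbb R^n$, let $\mathbf w$ be a weight vector as in the context and $\Delta:=\min\{w_l-w_{l+1}: l=1,\dots,p-1\}$. Let $\widehat{\mathbf x}$ be any minimizer of $$\|\mathbf A\mathbf x-\mathbf y\|_1+\Omega_{\mathbf w}(\mathbf x)$$ over $\mathbf x\in\mathbb R^p$. Then for every pair of columns $(i,j)$ for which $\|\operatorname{sign}(\widehat x_i)\mathbf a_i-\operatorname{sign}(\widehat x_j)\mathbf a_j\|_1<\Delta$, we have $|\widehat x_i|=|\widehat x_j|$.
   Context: $\mathbf w=(w_1,\dots,w_p)\in\mathbb R^p_+$ satisfies $w_1\ge w_2\ge\cdots\ge w_p\ge0$ and $w_1>0$. The ordered weighted $\ell_1$ (OWL) norm is $\Omega_{\mathbf w}(\mathbf x)=\sum_{i=1}^p w_i|x|_{[i]}$, where $|x|_{[i]}$ denotes the $i$-th largest component of $\mathbf x$ in magnitude. $\operatorname{sign}$ denotes the sign function. *)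

From HB Require Import structures.
From mathcomp Require Import all_boot all_order all_algebra.
Set Implicit Arguments. Unset Strict Implicit. Unset Printing Implicit Defensive.
Import Order.TTheory GRing.Theory Num.Theory.
Local Open Scope ring_scope.

Section OWL.
Variable R : realFieldType.

Definition sorted_abs (p : nat) (x : 'cV[R]_p) : seq R :=
  sort (fun a b : R => b <= a) [seq `|x i 0| | i <- enum 'I_p].

Definition owl (p : nat) (w : 'I_p -> R) (x : 'cV[R]_p) : R :=
  \sum_(i < p) w i * (sorted_abs x)`_i.

Definition l1norm (n : nat) (v : 'cV[R]_n) : R := \sum_(k < n) `|v k 0|.

Definition owl_obj (n p : nat) (A : 'M[R]_(n, p)) (y : 'cV[R]_n)
  (w : 'I_p -> R) (x : 'cV[R]_p) : R :=
  l1norm (A *m x - y) + owl w x.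

(* consecutive gaps w_l - w_{l+1}, l = 1..p-1 (0-based: l = 0..p-2) *)
Definition owl_gaps (p : nat) (w : 'I_p -> R) : seq R :=
  let ws := [seq w i | i <- enum 'I_p] in
  [seq ws`_l - ws`_l.+1 | l <- iota 0 p.-1].

(* Delta = min{w_l - w_{l+1}}; (conventionally 0 when p <= 1, where the set is empty) *)
Definition owl_Delta (p : nat) (w : 'I_p -> R) : R :=
  \big[Num.min/head 0 (owl_gaps w)]_(g <- owl_gaps w) g.

End OWL.

(* Suppose |x_i| > |x_j| and move a small amount e of magnitude from coordinate i to
   coordinate j, keeping the signs: x' = x - e (sg x_i e_i - sg x_j e_j).  The data-fit
   term grows by at most e ||sg x_i a_i - sg x_j a_j||_1 < e Delta.  For the penalty,
   sort x' by a permutation s; by the rearrangement inequality the same arrangement of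
   x is worth at most Omega_w(x), and the two arrangements differ only where s puts i
   and j: |x_i| loses e at an earlier position than the one where |x_j| gains at most e,
   so Omega_w(x') <= Omega_w(x) - e Delta, contradicting minimality. *)

From HB Require Import structures.
From mathcomp Require Import all_boot all_order all_algebra all_fingroup.
From mathcomp Require Import ring lra zify.
Import Order.TTheory GRing.Theory Num.Theory.
Set Implicit Arguments. Unset Strict Implicit. Unset Printing Implicit Defensive.
Local Open Scope ring_scope.

Lemma perm_cons_set_nth (T : eqType) (x0 : T) (t : seq T) m b :
  (m < size t)%N -> perm_eq (nth x0 t m :: set_nth x0 t m b) (b :: t).
Proof.
move=> lt_m; rewrite set_nthE lt_m -[in b :: t](cat_take_drop m t) (drop_nth x0 lt_m).
by apply/seq.permP => f; rewrite /= !count_cat /=; lia.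
Qed.

Section Rearrangement.
Variable R : realFieldType.

Lemma sum_set_nth n (w : 'I_n -> R) (t : seq R) (m : 'I_n) d :
  \sum_(i < n) w i * (set_nth 0 t m d)`_i = \sum_(i < n) w i * t`_i + w m * (d - t`_m).
Proof.
rewrite (bigD1 m) //= [in RHS](bigD1 m) //= nth_set_nth /= eqxx.
rewrite (eq_bigr (fun i => w i * t`_i)) => [|i ne_im]; first by ring.
by rewrite nth_set_nth /= ifN.
Qed.

Lemma sum_cons n (w : 'I_n.+1 -> R) a s :
  \sum_(i < n.+1) w i * (a :: s)`_i = w ord0 * a + \sum_(i < n) w (lift ord0 i) * s`_i.
Proof. by rewrite big_ord_recl. Qed.

Lemma rearrangement_le n (w : 'I_n -> R) (s t : seq R) :
  (forall i j : 'I_n, (i <= j)%N -> w j <= w i) ->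
  size s = n -> sorted >=%O s -> perm_eq t s ->
  \sum_(i < n) w i * t`_i <= \sum_(i < n) w i * s`_i.
Proof.
elim: n w s t => [|n IHn] w s t w_noninc size_s sorted_s perm_ts.
  by rewrite !big_ord0.
case: s size_s sorted_s perm_ts => // a s [size_s] sorted_as perm_ts.
case: t perm_ts => [/perm_size //|b t perm_ts].
have w'_noninc (i j : 'I_n) : (i <= j)%N -> w (lift ord0 j) <= w (lift ord0 i).
  by move=> le_ij; apply: w_noninc; rewrite !lift0.
have sorted_s : sorted >=%O s := path_sorted sorted_as.
rewrite !sum_cons; have [eq_ba|ne_ba] := eqVneq b a.
  rewrite eq_ba perm_cons in perm_ts *.
  by rewrite lerD2l (IHn _ _ _ w'_noninc size_s sorted_s perm_ts).
have le_ba : b <= a.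
  have b_in_s : b \in s.
    by have := perm_mem perm_ts b; rewrite !inE eqxx (negbTE ne_ba).
  by have /allP := order_path_min (rev_trans le_trans) sorted_as; apply.
have a_in_t : a \in t.
  by have := perm_mem perm_ts a; rewrite !inE eqxx eq_sym (negbTE ne_ba) /= => ->.
have size_t : size t = n by have := perm_size perm_ts; rewrite /= size_s => -[].
have lt_m : (index a t < n)%N by rewrite -size_t index_mem.
pose m := Ordinal lt_m.
(* Exchange the head [b] of [t] with the first occurrence [t`_m] of the maximum [a]. *)
have perm_t's : perm_eq (set_nth 0 t m b) s.
  rewrite -(perm_cons a) -{1}(nth_index 0 a_in_t).
  by rewrite (permPl (@perm_cons_set_nth _ 0 t m b _)) ?size_t.
have := sum_set_nth (fun i => w (lift ord0 i)) t m b; rewrite /= nth_index // => sum_t.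
have := IHn _ _ _ w'_noninc size_s sorted_s perm_t's; rewrite sum_t.
have : 0 <= (w ord0 - w (lift ord0 m)) * (a - b) by rewrite mulr_ge0 ?subr_ge0 ?w_noninc.
nra.
Qed.

End Rearrangement.

Section OWL.
Variable R : realFieldType.

Lemma l1normD n (u v : 'cV[R]_n) : l1norm (u + v) <= l1norm u + l1norm v.
Proof. by rewrite /l1norm -big_split /=; apply: ler_sum => k _; rewrite mxE ler_normD. Qed.

Lemma l1normZ n (c : R) (v : 'cV[R]_n) : l1norm (c *: v) = `|c| * l1norm v.
Proof. by rewrite /l1norm mulr_sumr; apply: eq_bigr => k _; rewrite mxE normrM. Qed.

Lemma l1normN n (v : 'cV[R]_n) : l1norm (- v) = l1norm v.
Proof. by rewrite -scaleN1r l1normZ normrN1 mul1r. Qed.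

Lemma normrB_mul_sg (x e : R) : 0 <= e <= `|x| -> `|x - e * Num.sg x| = `|x| - e.
Proof.
case/andP=> e_ge0 e_le; case: (ltrgt0P x) => [x_gt0|x_lt0|x_eq0] in e_le *.
- by rewrite gtr0_sg // mulr1 !ger0_norm //; lra.
- by rewrite ltr0_sg // mulrN1 opprK !ler0_norm //; lra.
- have -> : e = 0 by lra.
  by rewrite x_eq0 mul0r !subr0 normr0.
Qed.

Lemma normrD_mul_sg_le (x e : R) : 0 <= e -> `|x + e * Num.sg x| <= `|x| + e.
Proof.
move=> e_ge0; apply: le_trans (ler_normD _ _) _.
by rewrite lerD2l normrM ger0_norm // ler_piMr // normr_sg lern1 leq_b1.
Qed.

Lemma size_sorted_abs p (x : 'cV[R]_p) : size (sorted_abs x) = p.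
Proof. by rewrite size_sort size_map size_enum_ord. Qed.

Lemma sorted_abs_sorted p (x : 'cV[R]_p) : sorted >=%O (sorted_abs x).
Proof. by apply: sort_sorted => a b; apply: le_total. Qed.

Lemma sorted_abs_perm p (x : 'cV[R]_p) :
  exists s : 'S_p, sorted_abs x = [tuple `|x (s k) 0| | k < p].
Proof.
have /tuple_permP[s ->] : perm_eq (sorted_abs x) [tuple `|x k 0| | k < p].
  by rewrite perm_sort.
by exists s; congr tval; apply: eq_mktuple => k; rewrite tnth_mktuple.
Qed.

Lemma owl_sorting_perm p (w : 'I_p -> R) (x : 'cV[R]_p) :
  exists2 s : 'S_p, owl w x = \sum_(k < p) w k * `|x (s k) 0|
    & forall k l : 'I_p, (k <= l)%N -> `|x (s l) 0| <= `|x (s k) 0|.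
Proof.
have [s abs_xE] := sorted_abs_perm x.
exists s => [|k l le_kl].
  by rewrite /owl abs_xE; apply: eq_bigr => k _; rewrite nth_mktuple.
have := sorted_leq_nth ge_trans (fun a => lexx a) 0 (sorted_abs_sorted x).
rewrite abs_xE => /(_ k l); rewrite !inE size_tuple !ltn_ord !nth_mktuple; exact.
Qed.

Lemma owl_ge_perm p (w : 'I_p -> R) (x : 'cV[R]_p) (s : 'S_p) :
  (forall i j : 'I_p, (i <= j)%N -> w j <= w i) ->
  \sum_(k < p) w k * `|x (s k) 0| <= owl w x.
Proof.
move=> w_noninc; have perm_x : perm_eq [tuple `|x (s k) 0| | k < p] (sorted_abs x).
  rewrite perm_sym perm_sort perm_sym.
  apply/(@tuple_permP _ p _ [tuple `|x k 0| | k < p]); exists s.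
  by congr tval; apply: eq_mktuple => k; rewrite tnth_mktuple.
have := rearrangement_le w_noninc (size_sorted_abs x) (sorted_abs_sorted x) perm_x.
by under eq_bigr do rewrite nth_mktuple.
Qed.

Lemma owl_Delta_le p (w : 'I_p -> R) (k l : 'I_p) :
  (forall i j : 'I_p, (i <= j)%N -> w j <= w i) ->
  (k < l)%N -> owl_Delta w <= w k - w l.
Proof.
move=> w_noninc lt_kl; have lt_k1p : (k.+1 < p)%N := leq_ltn_trans lt_kl (ltn_ord l).
pose k1 := Ordinal lt_k1p.
have : owl_Delta w <= w k - w k1.
  have nth_w (i : 'I_p) : [seq w i | i <- enum 'I_p]`_i = w i.
    by rewrite (nth_map i) ?size_enum_ord // nth_ord_enum.
  apply: ge_bigmin_seq => //; apply/mapP; exists (k : nat).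
    by rewrite mem_iota add0n; lia.
  by rewrite -[k.+1]/(val k1) !nth_w.
by have := w_noninc k1 l lt_kl; lra.
Qed.

Lemma owl_shift_le p (w : 'I_p -> R) (x x' : 'cV[R]_p) (i j : 'I_p) (e : R) :
  (forall i j : 'I_p, (i <= j)%N -> w j <= w i) -> (forall i, 0 <= w i) -> 0 <= e ->
  `|x' i 0| = `|x i 0| - e -> `|x' j 0| <= `|x j 0| + e ->
  (forall k, k != i -> k != j -> `|x' k 0| = `|x k 0|) ->
  `|x' j 0| < `|x' i 0| ->
  owl w x' <= owl w x - e * owl_Delta w.
Proof.
move=> w_noninc w_ge0 e_ge0 x'_i x'_j x'_k lt_ji.
have [s owl_x' sorted_x'] := owl_sorting_perm w x'.
have owl_x := owl_ge_perm x s w_noninc.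
pose pos := (s^-1)%g.
have ne_ji : j != i by apply: contraTneq lt_ji => ->; rewrite ltxx.
have lt_pos : (pos i < pos j)%N.
  rewrite ltnNge; apply: contraTN lt_ji => le_pos; rewrite -leNgt.
  by have := sorted_x' _ _ le_pos; rewrite !permKV.
have Delta_le := owl_Delta_le w_noninc lt_pos.
have diffE : \sum_(k < p) w k * `|x' (s k) 0| - \sum_(k < p) w k * `|x (s k) 0| =
    w (pos i) * (`|x' i 0| - `|x i 0|) + w (pos j) * (`|x' j 0| - `|x j 0|).
  rewrite -sumrB (reindex_inj (@perm_inj _ pos)) (bigD1 i) // (bigD1 j) //=.
  rewrite big1 => [|k /andP[ne_ki ne_kj]]; last by rewrite permKV x'_k // subrr.
  by rewrite !permKV -!mulrBr addr0.
have : w (pos j) * (`|x' j 0| - `|x j 0|) <= w (pos j) * e.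
  by rewrite ler_wpM2l //; lra.
have : e * owl_Delta w <= e * (w (pos i) - w (pos j)) by rewrite ler_wpM2l.
rewrite x'_i in diffE; nra.
Qed.

Lemma owl_l1_argmin_abs_le n p (A : 'M[R]_(n, p)) (y : 'cV[R]_n) (w : 'I_p -> R)
    (xh : 'cV[R]_p) (i j : 'I_p) :
  (forall i j : 'I_p, (i <= j)%N -> w j <= w i) -> (forall i, 0 <= w i) ->
  (forall x, owl_obj A y w xh <= owl_obj A y w x) ->
  l1norm (Num.sg (xh i 0) *: col i A - Num.sg (xh j 0) *: col j A) < owl_Delta w ->
  `|xh i 0| <= `|xh j 0|.
Proof.
move=> w_noninc w_ge0 xh_min; set d := _ - _ => lt_d_Delta.
rewrite leNgt; apply/negP => lt_ji.
have ne_ij : i != j by apply: contraTneq lt_ji => ->; rewrite ltxx.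
pose e := (`|xh i 0| - `|xh j 0|) / 4.
have e_gt0 : 0 < e by rewrite divr_gt0 ?subr_gt0.
have e_le : e <= `|xh i 0| by rewrite /e; have := normr_ge0 (xh j 0); lra.
have e_gap : `|xh j 0| + e < `|xh i 0| - e by rewrite /e; lra.
pose x := xh - e *: (Num.sg (xh i 0) *: delta_mx i 0 - Num.sg (xh j 0) *: delta_mx j 0).
have xE k : x k 0 =
    xh k 0 - e * (Num.sg (xh i 0) * (k == i)%:R - Num.sg (xh j 0) * (k == j)%:R).
  by rewrite !mxE !andbT.
have x_i : `|x i 0| = `|xh i 0| - e.
  by rewrite xE eqxx (negbTE ne_ij) mulr1 mulr0 subr0 normrB_mul_sg // ltW.
have x_j : `|x j 0| <= `|xh j 0| + e.
  rewrite xE eqxx eq_sym (negbTE ne_ij) mulr1 mulr0 sub0r mulrN opprK.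
  exact/normrD_mul_sg_le/ltW.
have x_k k : k != i -> k != j -> `|x k 0| = `|xh k 0|.
  by move=> /negbTE ne_ki /negbTE ne_kj; rewrite xE ne_ki ne_kj !mulr0 subrr mulr0 subr0.
have owl_x : owl w x <= owl w xh - e * owl_Delta w.
  apply: (owl_shift_le _ _ (ltW e_gt0) x_i x_j x_k) => //.
  by rewrite x_i (le_lt_trans x_j e_gap).
have res_x : l1norm (A *m x - y) <= l1norm (A *m xh - y) + e * l1norm d.
  have -> : A *m x - y = (A *m xh - y) - e *: d.
    by rewrite mulmxBr -scalemxAr mulmxBr -!scalemxAr -!colE addrAC.
  by apply: le_trans (l1normD _ _) _; rewrite l1normN l1normZ gtr0_norm.
have := xh_min x; rewrite /owl_obj.
have : e * l1norm d < e * owl_Delta w by rewrite ltr_pM2l.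
lra.
Qed.

End OWL.

Unset Implicit Arguments.

(* The argument does not use [w_first_pos]. *)
Theorem theorem3 (R : realFieldType) (n p : nat)
  (A : 'M[R]_(n, p)) (y : 'cV[R]_n) (w : 'I_p -> R)
  (w_noninc : forall i j : 'I_p, (i <= j)%N -> w j <= w i)
  (w_nonneg : forall i : 'I_p, 0 <= w i)
  (w_first_pos : exists i : 'I_p, nat_of_ord i = 0%N /\ 0 < w i)
  (xh : 'cV[R]_p)
  (xh_min : forall x : 'cV[R]_p, owl_obj A y w xh <= owl_obj A y w x) :
  forall i j : 'I_p,
    l1norm (Num.sg (xh i 0) *: col i A - Num.sg (xh j 0) *: col j A)
      < owl_Delta w ->
    `|xh i 0| = `|xh j 0|.
Proof.
move=> i j lt_d_Delta; apply/le_anti/andP; split.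
  exact: owl_l1_argmin_abs_le w_noninc w_nonneg xh_min lt_d_Delta.
apply: owl_l1_argmin_abs_le w_noninc w_nonneg xh_min _.
by rewrite -l1normN opprB.
Qed.
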